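(* Let $r\ge 3$ and $n\ge 2$ be integers and let $|X_\ell|=n$ for all $1\le\ell\le r$. Let $\mathcal F\subseteq X_1\times\dots\times X_r$ be coordinate-wise shifted and non-trivial intersecting, and of maximum size among all coordinate-wise shifted non-trivial intersecting families in $X_1\times\dots\times X_r$. Then $$|\mathcal F|\le n^{r-1}-(n-1)^{r-1}+n-1.$$
   Context: Let $X_\ell=[n]$ for $1\le \ell\le r$. For $A,B\in X_1\times\dots\times X_r$, write $A\cap B=\{\ell:A[\ell]=B[\ell]\}$ ($A[\ell]$ the $\ell$-th coordinate). $\mathcal F$ is intersecting if $|A\cap B|\ge 1$ for all $A,B\in\mathcal F$; it is non-trivial if there is no coordinate $\ell$ on which all members of $\mathcal F$ agree. For $1\le\ell\le r$ and $1<j\le n$, the shift $S^{(\ell)}_j$ acts on $F\in\mathcal F$ by: if $F[\ell]=j$ and the sequence $F'$ obtained from $F$ by replacing its $\ell$-th coordinate by $1$ is not in $\mathcal F$, then $S^{(\ell)}_j(F)=F'$; otherwise $S^{(\ell)}_j(F)=F$; $S^{(\ell)}_j(\mathcal F)=\{S^{(\ell)}_j(F):F\in\mathcal F\}$. $\mathcal F$ is coordinate-wise shifted if $S^{(\ell)}_j(\mathcal F)=\mathcal F$ for all $1\le\ell\le r$ and all $1<j\le n$. *)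

(* Elements of [n] = {1,...,n} are represented by 'I_n = {0,...,n-1};
   the distinguished element 1 of [n] corresponds to the ordinal with value 0,
   and j with 1 < j <= n corresponds to ordinals with value 0 < val j. *)
From mathcomp Require Import all_boot.
Set Implicit Arguments. Unset Strict Implicit. Unset Printing Implicit Defensive.

Section Families.
Variables r n : nat.

Definition seqrn := {ffun 'I_r -> 'I_n}.

Definition agree (A B : seqrn) : {set 'I_r} := [set l | A l == B l].

Definition intersecting (F : {set seqrn}) : Prop :=
  forall A B, A \in F -> B \in F -> 1 <= #|agree A B|.

Definition nontrivial (F : {set seqrn}) : Prop :=
  ~ (exists l : 'I_r, forall A B, A \in F -> B \in F -> A l = B l).

Definition set_first (l : 'I_r) (A : seqrn) : seqrn :=
  [ffun k => if k == l then insubd (A k) 0 else A k].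

Definition shift_elt (l : 'I_r) (j : 'I_n) (F : {set seqrn}) (A : seqrn) : seqrn :=
  if (A l == j) && (set_first l A \notin F) then set_first l A else A.

Definition shift (l : 'I_r) (j : 'I_n) (F : {set seqrn}) : {set seqrn} :=
  [set shift_elt l j F A | A in F].

Definition cw_shifted (F : {set seqrn}) : Prop :=
  forall (l : 'I_r) (j : 'I_n), 0 < val j -> shift l j F = F.

End Families.

From mathcomp Require Import all_boot fingroup perm zify.
Set Implicit Arguments. Unset Strict Implicit. Unset Printing Implicit Defensive.

(* Shifting lets us zero out any coordinates of a member, so in a shifted
   intersecting family the zero sets [{l | A l = 1}] pairwise intersect, and
   non-triviality rules out singleton zero sets.  At most [(n - 1) ^ (r - |S|)]
   sequences have zero set [S], so it suffices to bound
   [\sum_(S in Z) q ^ (r - |S|)] for an intersecting family [Z] of subsets of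
   [[r]] without singletons.  Writing [z_k] for its number of [k]-sets and
   pairing the sizes [k] and [r - k], complementation gives
   [z_k + z_(r-k) <= C(r, k)] and Erdos-Ko-Rado gives
   [z_k <= C(r - 1, k - 1)]; as the weight of size [k] dominates that of size
   [r - k] when [2k <= r], the sum is at most that of the star of a point,
   corrected at the sizes [1] and [r - 1]. *)

Section CyclicArcs.
Variables r k : nat.
Hypotheses (k_gt0 : 0 < k) (k2_le_r : k.*2 <= r).

Let k_le_r : k <= r. Proof. move: k2_le_r; rewrite -addnn; lia. Qed.
Let r_gt0 : 0 < r. Proof. lia. Qed.

Definition cdist (x t : 'I_r) : nat := (x + (r - t)) %% r.

Definition cyclic_arc (t : 'I_r) : {set 'I_r} := [set x | cdist x t < k].

Lemma cdist_lt x t : cdist x t < r.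
Proof. exact: ltn_pmod. Qed.

Lemma cdist_add x u t : cdist x t = (cdist x u + cdist u t) %% r.
Proof.
rewrite /cdist modnDm.
have -> : x + (r - u) + (u + (r - t)) = x + (r - t) + r by have := ltn_ord u; lia.
by rewrite modnDr.
Qed.

Lemma cdist_inj t : injective (cdist^~ t).
Proof.
move=> x y /eqP; rewrite /cdist eqn_modDr !modn_small ?ltn_ord // => /eqP.
exact: val_inj.
Qed.

Lemma card_cyclic_arc t : #|cyclic_arc t| = k.
Proof.
pose rot (x : 'I_r) : 'I_r := Ordinal (cdist_lt x t).
have rot_inj : injective rot by move=> x y /(congr1 val) /cdist_inj.
have -> : cyclic_arc t = rot @^-1: [set y : 'I_r | y < k] by apply/setP=> x; rewrite !inE.
rewrite card_preimset // -sum1_card (eq_bigl (fun y : 'I_r => y < k)) => [|y].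
  by rewrite (big_ord_narrow k_le_r) sum1_card card_ord.
by rewrite inE.
Qed.

Lemma cdist_sub u t s : cdist t s <= cdist u s -> cdist u t = cdist u s - cdist t s.
Proof.
move=> le_ts_us; have := cdist_lt u t; have := cdist_lt t s.
rewrite (cdist_add u t s) in le_ts_us *.
have [small|big] := ltnP (cdist u t + cdist t s) r => ts_lt ut_lt.
  by rewrite modn_small //; lia.
have wrap : cdist u t + cdist t s = (cdist u t + cdist t s - r) + r by lia.
by rewrite wrap modnDr modn_small in le_ts_us; lia.
Qed.

Lemma cyclic_arcs_disjoint t u :
  k <= cdist u t <= r - k -> cyclic_arc t :&: cyclic_arc u = set0.
Proof.
move=> /andP[far1 far2]; apply/setP=> x; rewrite !inE; apply/negbTE/negP=> /andP[xt xu].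
move: xt; rewrite (cdist_add x u t) modn_small; lia.
Qed.

(* Offsets from a fixed [s] lie in [0, k) or (r - k, r); folding the second
   range onto the first by adding [k] is injective on pairwise meeting arcs,
   because two starts [k] apart give disjoint arcs. *)
Lemma card_meeting_cyclic_arcs (P : {set 'I_r}) :
  {in P &, forall t u, cyclic_arc t :&: cyclic_arc u != set0} -> #|P| <= k.
Proof.
move=> meet.
have [-> | [s sP]] := set_0Vmem P; first by rewrite cards0.
have near t u : t \in P -> u \in P -> cdist u t < k \/ r - k < cdist u t.
  move=> tP uP; case: (ltnP (cdist u t) k) => [|far1]; first by left.
  case: (ltnP (r - k) (cdist u t)) => [|far2]; first by right.
  by have := meet _ _ tP uP; rewrite cyclic_arcs_disjoint ?far1 ?far2 ?eqxx.
pose fold t := if cdist t s < k then cdist t s else cdist t s + k - r.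
have fold_lt t : t \in P -> fold t < k.
  by move=> tP; rewrite /fold; case: ifP => //; have := cdist_lt t s; lia.
have fold_inj : {in P &, injective fold}.
  move=> t u tP uP; rewrite /fold.
  have := near _ _ sP tP; have := near _ _ sP uP; have := near _ _ tP uP.
  have := near _ _ uP tP; have := cdist_lt t s; have := cdist_lt u s.
  case: (ltnP (cdist t s) k) => ts; case: (ltnP (cdist u s) k) => us ? ? ? ? ? ? fold_eq.
  - exact: (cdist_inj fold_eq).
  - by have := cdist_sub (ltnW (leq_trans ts us)); lia.
  - by have := cdist_sub (ltnW (leq_trans us ts)); lia.
  - by apply: (@cdist_inj s); lia.
rewrite cardE -(size_map fold) -(size_iota 0 k); apply: uniq_leq_size.
  by rewrite map_inj_in_uniq ?enum_uniq // => t u; rewrite !mem_enum; apply: fold_inj.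
by move=> y /mapP[t]; rewrite mem_enum => tP ->; rewrite mem_iota fold_lt.
Qed.
End CyclicArcs.

Lemma exists_perm_imset (T : finType) (A B : {set T}) :
  #|A| = #|B| -> exists s : {perm T}, s @: A = B.
Proof.
move: {2}#|A :\: B| (erefl #|A :\: B|) => m.
elim: m A => [|m IHm] A AB_card card_eq.
  exists 1%g; rewrite imset_perm1; apply/setP/subset_cardP => //.
  by rewrite -setD_eq0 -cards_eq0 AB_card.
have [x xAB] : exists x, x \in A :\: B by apply/set0Pn; rewrite -cards_eq0 AB_card.
have [y yBA] : exists y, y \in B :\: A.
  by apply/set0Pn; rewrite -cards_eq0 cardsD setIC -card_eq -cardsD AB_card.
move: (xAB) (yBA); rewrite !inE => /andP[xB xA] /andP[yA yB].
have swapped_card : #|tperm x y @: A :\: B| = m.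
  have -> : tperm x y @: A :\: B = (A :\: B) :\ x.
    apply/setP=> z; rewrite -tpermV im_permV !inE.
    case: tpermP => [->|->|zx zy]; first by rewrite eqxx (negbTE yA) andbF.
      by rewrite yB andbF.
    by rewrite (introF eqP zx).
  by move: AB_card; rewrite (cardsD1 x) xAB add1n => -[].
have [s sAB] := IHm _ swapped_card (etrans (card_imset _ (@perm_inj _ _)) card_eq).
exists (tperm x y * s)%g; rewrite -sAB -imset_comp; apply: eq_imset => z /=.
by rewrite permM.
Qed.

Section PermutationCounting.
Variable T : finType.
Implicit Types (X S : {set T}) (Y : {set {set T}}).

Definition perms_onto X S := [set s : {perm T} | s @: X == S].

Lemma card_perms_onto_eq X S1 S2 :
  #|S1| = #|S2| -> #|perms_onto X S1| = #|perms_onto X S2|.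
Proof.
wlog suff: S1 S2 / #|S1| = #|S2| -> #|perms_onto X S1| <= #|perms_onto X S2|.
  by move=> le card_eq; apply/eqP; rewrite eqn_leq !le.
move=> /exists_perm_imset[t tS12].
rewrite -(card_imset _ (mulIg t)); apply: subset_leq_card.
apply/subsetP=> p /imsetP[s]; rewrite !inE => /eqP sXS1 ->.
by rewrite -tS12 -sXS1 -imset_comp; apply/eqP/eq_imset => z; rewrite /= permM.
Qed.

Lemma card_perms_into X Y : {in Y, forall S, #|S| = #|X|} ->
  #|[set s : {perm T} | s @: X \in Y]| = #|Y| * #|perms_onto X X|.
Proof.
move=> Y_card; rewrite -sum1dep_card.
rewrite (partition_big (fun s : {perm T} => s @: X) (mem Y)) //=.
rewrite -sum_nat_const; apply: eq_bigr => S SY.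
rewrite -(card_perms_onto_eq X (Y_card S SY)) -sum1dep_card; apply: eq_bigl => s.
by case: eqP => [->|]; rewrite ?SY ?andbF.
Qed.

(* Since every set is hit equally often, [s @: X] is uniformly distributed
   over the sets of size [#|X|]. *)
Lemma card_perms_into_binomial X Y : {in Y, forall S, #|S| = #|X|} ->
  #|[set s : {perm T} | s @: X \in Y]| * 'C(#|T|, #|X|) = #|Y| * #|{perm T}|.
Proof.
move=> Y_card; set draws := [set S : {set T} | #|S| == #|X|].
have draws_card : {in draws, forall S, #|S| = #|X|} by move=> S; rewrite inE => /eqP.
have := card_perms_into draws_card; rewrite card_draws.
have -> : [set s : {perm T} | s @: X \in draws] = [set: {perm T}].
  by apply/setP=> s; rewrite !inE card_imset ?eqxx //; apply: perm_inj.
by rewrite cardsT card_perms_into // => ->; rewrite mulnAC mulnA.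
Qed.

End PermutationCounting.

Lemma double_counting (I J : finType) (P : I -> J -> bool) :
  \sum_(i : I) #|[set j | P i j]| = \sum_(j : J) #|[set i | P i j]|.
Proof.
rewrite (eq_bigr (fun i => \sum_(j | P i j) 1)) => [|i _]; last by rewrite sum1dep_card.
by rewrite (exchange_big_dep xpredT) //=; apply: eq_bigr => j _; rewrite sum1dep_card.
Qed.

(* Katona's cyclic proof: every permutation sends at most [k] of the [r]
   cyclic arcs into [Y], while each arc is sent into [Y] by the fraction
   [#|Y| / 'C(r, k)] of all permutations. *)
Theorem erdos_ko_rado r k (Y : {set {set 'I_r}}) :
  0 < k -> k.*2 <= r -> {in Y, forall S : {set 'I_r}, #|S| = k} ->
  {in Y &, forall S1 S2 : {set 'I_r}, S1 :&: S2 != set0} -> #|Y| <= 'C(r.-1, k.-1).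
Proof.
move=> k_gt0 k2_le_r Y_card Y_meet.
set N := #|{perm 'I_r}|.
have r_gt0 : 0 < r by lia.
have arc_hits (t : 'I_r) :
    #|[set s : {perm 'I_r} | s @: cyclic_arc k t \in Y]| * 'C(r, k) = #|Y| * N.
  have := @card_perms_into_binomial _ (cyclic_arc k t) Y.
  by rewrite card_cyclic_arc // card_ord; apply.
have perm_hits (s : {perm 'I_r}) : #|[set t : 'I_r | s @: cyclic_arc k t \in Y]| <= k.
  apply: (card_meeting_cyclic_arcs k_gt0 k2_le_r) => t u; rewrite !inE => tY uY.
  apply: contraNneq (Y_meet _ _ tY uY) => tu_disj.
  by rewrite -imsetI ?tu_disj ?imset0 // => x y _ _; apply: perm_inj.
have hits_le :
    \sum_(t : 'I_r) #|[set s : {perm 'I_r} | s @: cyclic_arc k t \in Y]| <= N * k.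
  rewrite -double_counting (leq_trans (leq_sum _ (fun s _ => perm_hits s))) //.
  by rewrite sum_nat_const.
have binC : r * 'C(r.-1, k.-1) = k * 'C(r, k) by rewrite mul_bin_diag prednK.
have : #|Y| * (r * N) <= 'C(r.-1, k.-1) * (r * N).
  have -> : #|Y| * (r * N) = \sum_(t : 'I_r) #|Y| * N.
    by rewrite sum_nat_const card_ord mulnCA.
  under eq_bigr => t _ do rewrite -(arc_hits t).
  rewrite -big_distrl (leq_trans (leq_mul hits_le (leqnn _))) //.
  by rewrite mulnA [_ * r]mulnC binC; nia.
by rewrite leq_pmul2r // muln_gt0 r_gt0 /N (cardD1 1%g).
Qed.

Section WeightedLevels.
Variables (r : nat) (Z : {set {set 'I_r}}).
Hypothesis Z_meet : {in Z &, forall S1 S2 : {set 'I_r}, S1 :&: S2 != set0}.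

Definition level k := #|[set S in Z | #|S| == k]|.

Lemma level0 : level 0 = 0.
Proof.
apply/eqP; rewrite cards_eq0; apply/eqP/setP=> S; rewrite !inE.
apply/negbTE/andP=> -[SZ /eqP/cards0_eq S0].
by have := Z_meet SZ SZ; rewrite S0 setI0 eqxx.
Qed.

Lemma level_compl k : k <= r -> level k + level (r - k) <= 'C(r, k).
Proof.
move=> k_le_r.
set A := [set S in Z | #|S| == k].
set B := [set ~: S | S in [set S in Z | #|S| == r - k]].
have card_B : #|B| = level (r - k) by rewrite card_imset //; apply: setC_inj.
have AB_disj : A :&: B = set0.
  apply/setP=> S; rewrite !inE; apply/negbTE/andP=> -[/andP[SZ _]].
  case/imsetP=> S'; rewrite inE => /andP[S'Z _] def_S.
  by have := Z_meet SZ S'Z; rewrite def_S setIC setICr eqxx.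
rewrite -card_B -cardsUI AB_disj cards0 addn0.
have := card_draws 'I_r k; rewrite card_ord => <-.
apply/subset_leq_card/subsetP=> S; rewrite !inE => /orP[/andP[_ //] | /imsetP[S' + ->]].
by rewrite inE => /andP[_ /eqP S'_card]; rewrite cardsCs setCK card_ord S'_card subKn.
Qed.

Lemma level_ekr k : 0 < k -> k.*2 <= r -> level k <= 'C(r.-1, k.-1).
Proof.
move=> k_gt0 k2_le_r; apply: erdos_ko_rado => // [S | S1 S2]; rewrite !inE.
  by move=> /andP[_ /eqP].
by move=> /andP[S1Z _] /andP[S2Z _]; apply: Z_meet.
Qed.

Lemma sum_weight_levels q :
  \sum_(S in Z) q ^ (r - #|S|) = \sum_(0 <= k < r.+1) level k * q ^ (r - k).
Proof.
rewrite big_mkord (partition_big (fun S : {set 'I_r} => inord #|S| : 'I_r.+1) predT) //=.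
apply: eq_bigr => k _; rewrite /level -sum1_card big_distrl /=.
rewrite big_mkcond [RHS]big_mkcond /=.
apply: eq_bigr => S _; rewrite inE mul1n.
have S_lt : #|S| < r.+1 by rewrite ltnS; have := max_card S; rewrite card_ord.
have -> : (inord #|S| == k) = (#|S| == k) by rewrite -(inj_eq val_inj) /= inordK.
by case: (S \in Z); case: eqP => // ->.
Qed.

Hypothesis Z_nonsingleton : {in Z, forall S : {set 'I_r}, #|S| != 1}.
Hypothesis r_gt2 : 2 < r.
Variable q : nat.

Lemma level1 : level 1 = 0.
Proof.
apply/eqP; rewrite cards_eq0; apply/eqP/setP=> S; rewrite !inE.
by apply/negbTE/andP=> -[/Z_nonsingleton/negbTE->].
Qed.

(* [star k] is the weight of the sets of size [k] containing a fixed point,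
   whose total is [(q + 1) ^ r.-1].  The bound differs from it at two sizes,
   recorded by [ends]: the singleton is excluded, losing [q ^ r.-1], and [r]
   instead of [r.-1] sets of size [r.-1] are allowed, gaining [q]. *)
Let weight k := level k * q ^ (r - k).
Let star k := (k != 0) * ('C(r.-1, k.-1) * q ^ (r - k)).
Let ends k := (k == 1) + (k == r.-1).

Lemma weight_pair_le_half k : k.*2 <= r ->
  weight k + weight (r - k) + ends k * q ^ r.-1 <= star k + star (r - k) + ends k * q.
Proof.
move=> k2_le_r; rewrite /weight /star /ends.
case: k k2_le_r => [|[|k]] k2_le_r.
- have := level_compl (leq0n r); rewrite level0 subn0 subnn binn bin0 expn0 /=.
  have -> : (0 == r.-1) = false by apply/negbTE; lia.
  have -> : (r != 0) = true by apply/eqP; lia.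
  lia.
- have := level_compl (ltnW (ltnW r_gt2)); rewrite level1 bin1 bin0 !subn1 /=.
  have -> : (1 == r.-1) = false by apply/negbTE; lia.
  have -> : (r.-1 != 0) = true by apply/eqP; lia.
  have -> : r - r.-1 = 1 by lia.
  have -> : 'C(r.-1, r.-2) = r.-1.
    by rewrite -(bin_sub (leq_pred r.-1)) (_ : r.-1 - r.-2 = 1) ?bin1 //; lia.
  nia.
- set k' := k.+2; have k'_le_r : k' <= r by lia.
  have ekr : level k' <= 'C(r.-1, k.+1) := level_ekr (isT : 0 < k') k2_le_r.
  have := level_compl k'_le_r; rewrite /=.
  have -> : (k' == r.-1) = false by apply/negbTE; lia.
  have -> : (r - k' != 0) = true by apply/eqP; lia.
  have -> : r - (r - k') = k' by lia.
  have -> : 'C(r, k') = 'C(r.-1, k.+1) + 'C(r.-1, k').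
    by rewrite -{1}(ltn_predK r_gt2) binS addnC.
  have -> : 'C(r.-1, (r - k').-1) = 'C(r.-1, k').
    by rewrite -bin_sub; [congr 'C(_, _) | ]; lia.
  have : q ^ k' <= q ^ (r - k').
    by case: q => [|q']; [rewrite !exp0n //; lia | apply: leq_pexp2l; lia].
  rewrite !mul1n !mul0n !addn0; nia.
Qed.

Lemma weight_pair_le k : k <= r ->
  weight k + weight (r - k) + ends k * q ^ r.-1 <= star k + star (r - k) + ends k * q.
Proof.
move=> k_le_r; have [|r_lt_k2] := leqP k.*2 r; first exact: weight_pair_le_half.
have ends_sym : ends (r - k) = ends k.
  rewrite /ends addnC; congr (_ + _); apply/eqP/eqP; lia.
have := @weight_pair_le_half (r - k); rewrite subKn // ends_sym.
by rewrite (addnC (weight k)) (addnC (star k)); apply; lia.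
Qed.

Lemma sum_star : \sum_(0 <= k < r.+1) star k = (q + 1) ^ r.-1.
Proof.
rewrite big_nat_recl // {1}/star add0n expnDn (ltn_predK r_gt2) big_mkord.
apply: eq_bigr => i _; rewrite /star /= exp1n muln1 mul1n.
by congr (_ * q ^ _); lia.
Qed.

Lemma sum_weight_le :
  \sum_(S in Z) q ^ (r - #|S|) + q ^ r.-1 <= (q + 1) ^ r.-1 + q.
Proof.
have sum_rev F : \sum_(0 <= k < r.+1) F (r - k) = \sum_(0 <= k < r.+1) F k.
  by rewrite [RHS]big_nat_rev; apply: eq_bigr => k _; rewrite add0n subSS.
have sum_ends c : \sum_(0 <= k < r.+1) ends k * c = c.*2.
  have sum_at i : i <= r -> \sum_(0 <= k < r.+1) (k == i) * c = c.
    move=> i_le_r; rewrite (eq_bigr (fun k => if k == i then c else 0)) => [|k _].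
      by rewrite -big_mkcond big_nat1_eq /= ltnS i_le_r.
    by case: (k == i); rewrite ?mul1n.
  rewrite /ends; under eq_bigr do rewrite mulnDl.
  by rewrite big_split /= !sum_at -?addnn //; lia.
have : \sum_(0 <= k < r.+1) (weight k + weight (r - k) + ends k * q ^ r.-1) <=
       \sum_(0 <= k < r.+1) (star k + star (r - k) + ends k * q).
  rewrite big_nat_cond [leqRHS]big_nat_cond.
  by apply: leq_sum => k /andP[/andP[_ k_lt] _]; apply: weight_pair_le.
rewrite !big_split /= !sum_rev !sum_ends sum_star sum_weight_levels -!addnn /weight; lia.
Qed.

End WeightedLevels.

Section ShiftedFamilies.
Variables r n : nat.
Hypothesis n_gt0 : 0 < n.
Implicit Types (F : {set seqrn r n}) (A B : seqrn r n) (J S : {set 'I_r}).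

Definition zero_on J A : seqrn r n := [ffun l => if l \in J then insubd (A l) 0 else A l].

Definition zeroset A : {set 'I_r} := [set l | val (A l) == 0].

Lemma zero_on_val J A l : val (zero_on J A l) = if l \in J then 0 else val (A l).
Proof. by rewrite ffunE; case: ifP => // _; rewrite val_insubd n_gt0. Qed.

Lemma set_first_val l A l' : val (set_first l A l') = if l' == l then 0 else val (A l').
Proof. by rewrite ffunE; case: eqP => // _; rewrite val_insubd n_gt0. Qed.

Lemma shifted_set_first F l A : cw_shifted F -> A \in F -> set_first l A \in F.
Proof.
move=> F_shifted AF; have [Al0|Al_gt0] := posnP (val (A l)).
  suff -> : set_first l A = A by [].
  by apply/ffunP=> l'; apply: val_inj; rewrite set_first_val; case: eqP => // ->.
apply: contraT => A'F; have := F_shifted l (A l) Al_gt0.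
move=> /setP/(_ (shift_elt l (A l) F A)); rewrite imset_f // /shift_elt eqxx A'F => /esym.
by rewrite (negbTE A'F).
Qed.

Lemma shifted_zero_on F J A : cw_shifted F -> A \in F -> zero_on J A \in F.
Proof.
move=> F_shifted AF; rewrite -[J]set_enum; elim: (enum J) => [|l s IHs].
  suff -> : zero_on [set x in [::]] A = A by [].
  by apply/ffunP=> l; apply: val_inj; rewrite zero_on_val inE.
suff -> : zero_on [set x in l :: s] A = set_first l (zero_on [set x in s] A).
  exact: shifted_set_first.
apply/ffunP=> l'; apply: val_inj; rewrite set_first_val !zero_on_val !inE.
by case: (l' == l).
Qed.

(* Zeroing [A] on the coordinates where it agrees with [B] keeps it in [F],
   so the new sequence agrees with [B] only at a common zero. *)
Lemma zerosets_meet F A B : cw_shifted F -> intersecting F -> A \in F -> B \in F ->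
  zeroset A :&: zeroset B != set0.
Proof.
move=> F_shifted F_int AF BF.
have := F_int _ _ (shifted_zero_on (agree A B) F_shifted AF) BF.
rewrite card_gt0 => /set0Pn[l]; rewrite !inE => /eqP/(congr1 val).
rewrite zero_on_val inE; case: eqP => [ABl | nABl] A'Bl.
  by apply/set0Pn; exists l; rewrite !inE ABl -A'Bl.
by case: nABl; apply: val_inj.
Qed.

Lemma zeroset_nonsingleton F A : cw_shifted F -> intersecting F -> nontrivial F ->
  A \in F -> #|zeroset A| != 1.
Proof.
move=> F_shifted F_int F_nontriv AF; apply/negP => /cards1P[l zA].
have zero_at_l B : B \in F -> val (B l) = 0.
  move=> BF; have := zerosets_meet F_shifted F_int AF BF; rewrite zA.
  by case/set0Pn=> x; rewrite !inE => /andP[/eqP-> /eqP].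
by apply: F_nontriv; exists l => B C BF CF; apply: val_inj; rewrite !zero_at_l.
Qed.

Lemma card_zeroset_eq S : #|[set A : seqrn r n | zeroset A == S]| = n.-1 ^ (r - #|S|).
Proof.
pose z0 : 'I_n := Ordinal n_gt0.
pose allowed l := if l \in S then pred1 z0 else predC1 z0.
have -> : [set A : seqrn r n | zeroset A == S] = [set A : seqrn r n | A \in family allowed].
  apply/setP=> A; rewrite !inE; apply/eqP/familyP => [zA l | A_allowed].
    rewrite /allowed -zA !inE.
    by case: ifP => /eqP A0; rewrite !inE -(inj_eq val_inj); apply/eqP.
  apply/setP=> l; rewrite inE; have := A_allowed l; rewrite /allowed.
  case: (l \in S); rewrite !inE -(inj_eq val_inj); first by move=> ->.
  by move/negbTE.
rewrite cardsE card_family foldrE big_map big_enum /= (bigID (mem S)) /=.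
rewrite (eq_bigr (fun=> 1)) => [|l lS]; last by rewrite /allowed lS card1.
rewrite [X in _ * X](eq_bigr (fun=> n.-1)) => [|l lS]; last first.
  by rewrite /allowed (negbTE lS) cardC1 card_ord.
rewrite !prod_nat_const exp1n mul1n; congr (_ ^ _).
transitivity #|~: S|; first by apply: eq_card => l; rewrite !inE.
by rewrite cardsCs setCK card_ord.
Qed.

Lemma card_le_sum_zerosets F :
  #|F| <= \sum_(S in [set zeroset A | A in F]) n.-1 ^ (r - #|S|).
Proof.
rewrite -sum1_card (partition_big (@zeroset) (mem [set zeroset A | A in F])) /=;
  last by move=> A AF; apply: imset_f.
apply: leq_sum => S _; rewrite -card_zeroset_eq -sum1dep_card.
rewrite big_mkcond [leqRHS]big_mkcond; apply: leq_sum => A _.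
by case: (A \in F); case: eqP.
Qed.

End ShiftedFamilies.

Theorem lemma2p5 (r n : nat) (F : {set seqrn r n}) :
  3 <= r -> 2 <= n ->
  cw_shifted F -> intersecting F -> nontrivial F ->
  (forall G : {set seqrn r n},
      cw_shifted G -> intersecting G -> nontrivial G -> #|G| <= #|F|) ->
  #|F| <= n ^ (r - 1) - (n - 1) ^ (r - 1) + n - 1.
Proof.
move=> r_gt2 n_gt1 F_shifted F_int F_nontriv _.
have n_gt0 : 0 < n by lia.
pose Z := [set zeroset A | A in F].
have Z_meet : {in Z &, forall S1 S2 : {set 'I_r}, S1 :&: S2 != set0}.
  by move=> _ _ /imsetP[A AF ->] /imsetP[B BF ->]; apply: zerosets_meet AF BF.
have Z_nonsingleton : {in Z, forall S : {set 'I_r}, #|S| != 1}.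
  by move=> _ /imsetP[A AF ->]; apply: zeroset_nonsingleton AF.
have := sum_weight_le Z_meet Z_nonsingleton r_gt2 n.-1.
have := card_le_sum_zerosets n_gt0 F.
rewrite -/Z addn1 prednK // -!subn1.
set W := \sum_(S in Z) _; set a := n ^ (r - 1); set b := (n - 1) ^ (r - 1); lia.
Qed.
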